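(* Suppose $S$ is a complex-valued function of $z,p,b,T$ satisfying \[ \frac{S}{1+S}-zS=c+t, \] where $z=vi$ with $v\in\mathbb{R}^+$, $c=p/bT\in[0,1]$, and $t\in\mathbb{C}$ is also a function of $z,p,b,T$. Assume $S$ is continuous in $z$ and always has non-negative real part, and that $|t|\le\tau(p,b,T)/v$ where $\tau$ does not depend on $v$. If for some $v_0\ge2c$ \[ \frac{v_0+(1-c)}{\sqrt2}>\frac{\tau}{v_0}+2\sqrt{cv_0}+2\sqrt\tau, \] then for all $v\ge v_0$, \[ |\operatorname{Im}S|,\ |\operatorname{Re}S|\ \le\ |S|\ \le\ \sqrt{\frac2v\,|c+t|}. \]
   Context: Here $p,b,T$ are positive integers (fixed while $v$ varies). *)

From Stdlib Require Import Reals.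
From Coquelicot Require Export Coquelicot.
Open Scope R_scope.

Definition cpar (p b T : nat) : R := INR p / (INR b * INR T).

From Stdlib Require Import Reals Lra Psatz.
From Coquelicot Require Import Coquelicot.
Open Scope R_scope.

(* With W := iv - 1/(1+S) ([cofactor v S]) the equation factors as c + t = -S W, so
   |c + t| = |S| |W| and the bound follows as soon as |W| >= v |S|.  The excess
   |W|^2 - v^2 |S|^2 is continuous in v and nonnegative for large v, where |W| ~ v.
   It never vanishes on [v0, oo): |W| = v |S| would give |c - 1 + iv + t| =
   |W - ivS| <= 2 |W|, i.e. |c - 1 + iv + t|^2 <= 4 v |c + t|, which the hypothesis
   on v0 rules out.  By the intermediate value theorem the excess stays nonnegative
   on [v0, oo). *)

Lemma sqrt_add_le (a b : R) : 0 <= a -> 0 <= b -> sqrt (a + b) <= sqrt a + sqrt b.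
Proof.
  intros Ha Hb.
  pose proof (sqrt_pos a); pose proof (sqrt_pos b).
  rewrite <- (sqrt_pow2 (sqrt a + sqrt b)) by lra.
  apply sqrt_le_1_alt.
  pose proof (sqrt_sqrt a Ha); pose proof (sqrt_sqrt b Hb); nra.
Qed.

Lemma div_sqrt2_sub_sqrt_mul_le (c u v : R) : 0 <= c -> 2 * c <= u -> u <= v ->
  u / sqrt 2 - 2 * sqrt (c * u) <= v / sqrt 2 - 2 * sqrt (c * v).
Proof.
  intros Hc Hcu Huv.
  set (r := sqrt 2); set (a := sqrt (c * v)); set (b := sqrt (c * u)).
  assert (Hr : 0 < r) by exact Rlt_sqrt2_0.
  assert (Hr2 : r * r = 2) by (apply sqrt_sqrt; lra).
  assert (Hb : 0 <= b) by apply sqrt_pos.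
  assert (Hb2 : b * b = c * u) by (apply sqrt_sqrt; nra).
  (* [b r = sqrt (2 c u) >= 2 c] caps the growth of [sqrt (c x)] beyond [u] at slope [1 / (2 sqrt 2)]. *)
  assert (Hbr : 2 * c <= b * r).
  { unfold b, r; rewrite <- sqrt_mult by nra.
    rewrite <- (sqrt_pow2 (2 * c)) by lra; apply sqrt_le_1_alt; nra. }
  set (m := b + (v - u) / (2 * r)).
  assert (Ham : a <= m).
  { unfold a; rewrite <- (sqrt_pow2 m).
    - apply sqrt_le_1_alt; unfold m.
      replace ((b + (v - u) / (2 * r)) ^ 2)
        with (b * b + (b * r) * (v - u) / (r * r) + ((v - u) / (2 * r)) ^ 2)
        by (field; lra).
      rewrite Hr2, Hb2.
      pose proof (pow2_ge_0 ((v - u) / (2 * r))); nra.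
    - unfold m; apply Rplus_le_le_0_compat; [lra|].
      apply Rdiv_le_0_compat; lra. }
  unfold m in Ham.
  replace (v / r) with (u / r + 2 * ((v - u) / (2 * r))) by (field; lra).
  lra.
Qed.

Lemma continuous_ge0_of_nonvanishing (f : R -> R) (a M : R) :
  (forall x, a <= x -> continuity_pt f x) ->
  (forall x, a <= x -> f x <> 0) ->
  (forall x, M <= x -> 0 <= f x) ->
  forall x, a <= x -> 0 <= f x.
Proof.
  intros Hcont Hnz Hlarge x Hx.
  apply Rnot_lt_le; intro Hneg.
  set (y := Rmax x M + 1).
  assert (Hxy : x < y) by (unfold y; pose proof (Rmax_l x M); lra).
  assert (HMy : M <= y) by (unfold y; pose proof (Rmax_r x M); lra).
  assert (Hy : 0 < f y).
  { destruct (Hlarge y HMy) as [| E]; [assumption|].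
    exfalso; apply (Hnz y); [lra | auto]. }
  destruct (Ranalysis5.IVT_interv f x y) as [z [Hz Hz0]]; auto.
  - intros w Hw; apply Hcont; lra.
  - apply (Hnz z); [lra | exact Hz0].
Qed.

Lemma im_le_Cmod (z : C) : Rabs (Im z) <= Cmod z.
Proof. eapply Rle_trans; [apply Rmax_r | apply Rmax_Cmod]. Qed.

Lemma Cmod_ge_l1_div_sqrt2 (z : C) : (Rabs (Re z) + Rabs (Im z)) / sqrt 2 <= Cmod z.
Proof.
  apply Rle_div_l; [exact Rlt_sqrt2_0|].
  unfold Cmod; rewrite <- sqrt_mult by (nra || lra).
  rewrite <- (sqrt_pow2 (Rabs (Re z) + Rabs (Im z))) by
    (pose proof (Rabs_pos (Re z)); pose proof (Rabs_pos (Im z)); lra).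
  apply sqrt_le_1_alt.
  rewrite <- (pow2_abs (fst z)), <- (pow2_abs (snd z)).
  pose proof (pow2_ge_0 (Rabs (Re z) - Rabs (Im z))); unfold Re, Im in *; nra.
Qed.

Lemma Cmod_shift_ge (c v : R) : c <= 1 -> 0 <= v ->
  (v + (1 - c)) / sqrt 2 <= Cmod (c - 1 + (0, v))%C.
Proof.
  intros Hc Hv; eapply Rle_trans; [| apply Cmod_ge_l1_div_sqrt2].
  cbv [Re Im Cminus Cplus Copp RtoC fst snd].
  rewrite Rplus_0_l, Rplus_0_r, Rabs_left1, Rabs_right by lra.
  right; f_equal; ring.
Qed.

Lemma shift_dominates (c tau v0 v : R) (tt : C) :
  0 <= c <= 1 -> 0 < v0 -> 2 * c <= v0 -> v0 <= v -> Cmod tt <= tau / v ->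
  (v0 + (1 - c)) / sqrt 2 > tau / v0 + 2 * sqrt (c * v0) + 2 * sqrt tau ->
  4 * v * Cmod (c + tt) < Cmod (c - 1 + (0, v) + tt) ^ 2.
Proof.
  intros Hc Hv0 Hcv0 Hv Ht Hgap.
  assert (Htau : 0 <= tau).
  { assert (0 <= tau / v) by (pose proof (Cmod_ge_0 tt); lra).
    replace tau with (tau / v * v) by (field; lra); apply Rmult_le_pos; lra. }
  set (e := Cmod (c + tt)).
  assert (He : e <= c + tau / v).
  { unfold e; eapply Rle_trans; [apply Cmod_triangle|].
    rewrite Cmod_R, Rabs_right by lra; lra. }
  assert (Hsqrt : sqrt (v * e) <= sqrt (c * v) + sqrt tau).
  { eapply Rle_trans; [| apply sqrt_add_le; nra].
    apply sqrt_le_1_alt.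
    replace (c * v + tau) with (v * (c + tau / v)) by (field; lra).
    apply Rmult_le_compat_l; lra. }
  assert (Hshift : (v + (1 - c)) / sqrt 2 - tau / v <= Cmod (c - 1 + (0, v) + tt)).
  { pose proof (Cmod_shift_ge c v (proj2 Hc) ltac:(lra)).
    pose proof (Cmod_triangle (c - 1 + (0, v) + tt) (- tt)) as Htri.
    rewrite Cmod_opp in Htri.
    replace (c - 1 + (0, v) + tt + - tt)%C with (c - 1 + (0, v))%C in Htri by ring.
    lra. }
  assert (Hmono := div_sqrt2_sub_sqrt_mul_le c v0 v (proj1 Hc) Hcv0 Hv).
  assert (Htv : tau / v <= tau / v0).
  { unfold Rdiv; apply Rmult_le_compat_l; [lra|]; apply Rinv_le_contravar; lra. }
  assert (Hlt : 2 * sqrt (v * e) < Cmod (c - 1 + (0, v) + tt)).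
  { replace ((v + (1 - c)) / sqrt 2) with (v / sqrt 2 + (1 - c) / sqrt 2) in Hshift
      by (field; apply sqrt2_neq_0).
    replace ((v0 + (1 - c)) / sqrt 2) with (v0 / sqrt 2 + (1 - c) / sqrt 2) in Hgap
      by (field; apply sqrt2_neq_0).
    lra. }
  pose proof (sqrt_pos (v * e)).
  assert (Hve : sqrt (v * e) * sqrt (v * e) = v * e)
    by (apply sqrt_sqrt, Rmult_le_pos; [lra | apply Cmod_ge_0]).
  nra.
Qed.

Definition cofactor (v : R) (s : C) : C := ((0, v) - / (1 + s))%C.
Definition excess (v : R) (s : C) : R := Cmod (cofactor v s) ^ 2 - v ^ 2 * Cmod s ^ 2.

Lemma one_plus_neq0 (s : C) : 0 <= Re s -> (1 + s <> 0)%C.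
Proof. intros Hs E; apply (f_equal Re) in E; simpl in E; unfold Re in Hs; lra. Qed.

(* Also valid at s = -1, where both sides reduce via [Rinv 0 = 0]; hence no side condition. *)
Lemma excess_formula (v : R) (s : C) :
  excess v s = v ^ 2 * (1 - (Re s ^ 2 + Im s ^ 2))
               + (1 + 2 * v * Im s) / ((1 + Re s) ^ 2 + Im s ^ 2).
Proof.
  unfold excess, cofactor; rewrite !Cmod2_alt.
  destruct s as [x y]; cbv [Re Im Cinv Cminus Cplus Copp RtoC fst snd]; rewrite !Rplus_0_l.
  set (D := (1 + x) ^ 2 + y ^ 2).
  destruct (Req_dec D 0) as [D0 | Dnz].
  - unfold Rdiv; rewrite D0, Rinv_0; ring.
  - unfold D in *; field; exact Dnz.
Qed.

Lemma continuous_excess (S : R -> C) (v : R) :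
  continuous S v -> 0 <= Re (S v) -> continuity_pt (fun w => excess w (S w)) v.
Proof.
  intros HS Hre.
  assert (HRe : continuity_pt (fun w => Re (S w)) v).
  { apply continuity_pt_filterlim, (continuous_comp S Re); [exact HS|].
    destruct (S v); apply continuous_fst. }
  assert (HIm : continuity_pt (fun w => Im (S w)) v).
  { apply continuity_pt_filterlim, (continuous_comp S Im); [exact HS|].
    destruct (S v); apply continuous_snd. }
  eapply continuity_pt_ext; [intro w; symmetry; apply excess_formula|].
  assert (HD : (1 + Re (S v)) ^ 2 + Im (S v) ^ 2 <> 0) by nra.
  repeat first [apply continuity_pt_minus | apply continuity_pt_plus
    | apply continuity_pt_mult | apply continuity_pt_div | apply continuity_pt_pow
    | apply continuity_pt_id | apply continuity_pt_const; intros ? ?; reflexivity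
    | apply continuity_pt_inv | assumption].
Qed.

Lemma Im_cofactor_ge (v : R) (s : C) : 0 <= Re s -> v - 1 / 2 <= Im (cofactor v s).
Proof.
  destruct s as [x y]; cbv [Re Im cofactor Cminus Cplus Copp Cinv RtoC fst snd]; intros Hx.
  rewrite !Rplus_0_l.
  assert (HD : 1 + y ^ 2 <= (1 + x) ^ 2 + y ^ 2) by nra.
  assert (y / ((1 + x) ^ 2 + y ^ 2) >= - (1 / 2)).
  { apply Rle_ge, Rle_div_r; [nra|].
    pose proof (pow2_ge_0 (y + 1)); nra. }
  replace (- (- y / ((1 + x) ^ 2 + y ^ 2))) with (y / ((1 + x) ^ 2 + y ^ 2))
    by (field; nra).
  lra.
Qed.

Section Equation.

Variables (c v : R) (s tt : C).
Hypothesis Re_s_ge0 : 0 <= Re s.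
Hypothesis eqn : (s / (1 + s) - (0, v) * s = c + tt)%C.

Lemma rhs_factor : (c + tt = - (s * cofactor v s))%C.
Proof.
  rewrite <- eqn; unfold cofactor; field; exact (one_plus_neq0 s Re_s_ge0).
Qed.

Lemma Cmod_rhs : Cmod (c + tt) = Cmod s * Cmod (cofactor v s).
Proof. rewrite rhs_factor, Cmod_opp; apply Cmod_mult. Qed.

Lemma rhs_shift : (c - 1 + (0, v) + tt = cofactor v s - (0, v) * s)%C.
Proof.
  replace (c - 1 + (0, v) + tt)%C with (c + tt - 1 + (0, v))%C by ring.
  rewrite <- eqn; unfold cofactor; field; exact (one_plus_neq0 s Re_s_ge0).
Qed.

Lemma excess_neq0 : 0 < v ->
  4 * v * Cmod (c + tt) < Cmod (c - 1 + (0, v) + tt) ^ 2 -> excess v s <> 0.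
Proof.
  intros Hv Hdom Hex.
  rewrite Cmod_rhs, rhs_shift in Hdom.
  set (w := Cmod (cofactor v s)) in *; set (m := Cmod s) in *.
  assert (Hw : 0 <= w) by apply Cmod_ge_0; assert (Hm : 0 <= m) by apply Cmod_ge_0.
  assert (Hwm : w = v * m).
  { unfold excess in Hex; fold w m in Hex.
    assert (E : (w - v * m) * (w + v * m) = 0) by nra.
    apply Rmult_integral in E; destruct E; nra. }
  assert (Htri : Cmod (cofactor v s - (0, v) * s) <= 2 * v * m).
  { unfold Cminus; eapply Rle_trans; [apply Cmod_triangle|].
    rewrite Cmod_opp, Cmod_mult; fold w m.
    replace (Cmod (0, v)) with v; [lra|].
    unfold Cmod; simpl; rewrite <- (sqrt_pow2 v) at 1 by lra; f_equal; ring. }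
  pose proof (Cmod_ge_0 (cofactor v s - (0, v) * s)).
  rewrite Hwm in Hdom; nra.
Qed.

Lemma excess_ge0_large (tau : R) : 0 <= c <= 1 -> 0 <= tau -> 3 + tau <= v ->
  Cmod tt <= tau / v -> 0 <= excess v s.
Proof.
  intros Hc Htau Hv Ht.
  assert (Hrhs : Cmod s * Cmod (cofactor v s) <= c + tau / v).
  { rewrite <- Cmod_rhs; eapply Rle_trans; [apply Cmod_triangle|].
    rewrite Cmod_R, Rabs_right by lra; lra. }
  assert (HW : v - 1 / 2 <= Cmod (cofactor v s)).
  { eapply Rle_trans; [apply Im_cofactor_ge, Re_s_ge0|].
    eapply Rle_trans; [apply Rle_abs | apply im_le_Cmod]. }
  unfold excess.
  set (w := Cmod (cofactor v s)) in *; set (m := Cmod s) in *.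
  assert (Hm : 0 <= m) by apply Cmod_ge_0.
  apply Rnot_lt_le; intro Hneg.
  assert (Hwm : w < v * m).
  { apply Rnot_le_lt; intro K.
    assert (v * m * (v * m) <= w * w) by (apply Rmult_le_compat; nra).
    nra. }
  assert (Hvmw : v * (m * w) <= c * v + tau).
  { replace (c * v + tau) with (v * (c + tau / v)) by (field; lra).
    apply Rmult_le_compat_l; lra. }
  assert (w * w < v * m * w) by (apply Rmult_lt_compat_r; lra).
  assert ((v - 1 / 2) * (v - 1 / 2) <= w * w) by (apply Rmult_le_compat; lra).
  nra.
Qed.

Lemma Cmod_sqr_le_of_excess_ge0 : 0 < v -> 0 <= excess v s ->
  Cmod s ^ 2 <= Cmod (c + tt) / v.
Proof.
  intros Hv Hex; rewrite Cmod_rhs.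
  unfold excess in Hex.
  set (w := Cmod (cofactor v s)) in *; set (m := Cmod s) in *.
  assert (Hw : 0 <= w) by apply Cmod_ge_0; assert (Hm : 0 <= m) by apply Cmod_ge_0.
  assert (Hwm : v * m <= w).
  { apply Rnot_lt_le; intro K.
    assert (w * w < v * m * (v * m)) by (apply Rmult_le_0_lt_compat; lra).
    nra. }
  apply (Rle_div_r _ _ v Hv).
  assert (v * m * m <= w * m) by (apply Rmult_le_compat_r; lra).
  nra.
Qed.

End Equation.

Theorem mainTheorem13 (p b T : nat) (hp : (0 < p)%nat) (hb : (0 < b)%nat) (hT : (0 < T)%nat)
  (S t : R -> C) (tau : R) :
  0 <= cpar p b T <= 1 ->
  (* the defining equation  S/(1+S) - z S = c + t,  z = v i, for every v > 0 *)
  (forall v : R, 0 < v ->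
     Cminus (Cdiv (S v) (Cplus (RtoC 1) (S v))) (Cmult (0, v) (S v))
     = Cplus (RtoC (cpar p b T)) (t v)) ->
  (* S continuous in z = v i, for v > 0 *)
  (forall v : R, 0 < v -> continuous S v) ->
  (* S always has non-negative real part *)
  (forall v : R, 0 < v -> 0 <= Re (S v)) ->
  (* |t| <= tau / v *)
  (forall v : R, 0 < v -> Cmod (t v) <= tau / v) ->
  forall v0 : R, 0 < v0 -> 2 * cpar p b T <= v0 ->
  (v0 + (1 - cpar p b T)) / sqrt 2 >
    tau / v0 + 2 * sqrt (cpar p b T * v0) + 2 * sqrt tau ->
  forall v : R, v0 <= v ->
    Rabs (Im (S v)) <= Cmod (S v) /\ Rabs (Re (S v)) <= Cmod (S v) /\
    Cmod (S v) <= sqrt (2 / v * Cmod (Cplus (RtoC (cpar p b T)) (t v))).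
Proof.
  intros Hc Heq Hcont HRe Ht v0 Hv0 Hcv0 Hgap v Hv.
  set (c := cpar p b T) in *.
  assert (Htau : 0 <= tau).
  { pose proof (Ht 1 Rlt_0_1); pose proof (Cmod_ge_0 (t 1)); rewrite Rdiv_1_r in *; lra. }
  assert (Hexcess : 0 <= excess v (S v)).
  { apply (continuous_ge0_of_nonvanishing (fun w => excess w (S w)) v0 (3 + tau));
      [| | | exact Hv]; intros w Hw.
    - apply continuous_excess; [apply Hcont | apply HRe]; lra.
    - apply (excess_neq0 c w (S w) (t w)); [apply HRe | apply Heq | |
        apply (shift_dominates c tau v0); try apply Ht]; lra.
    - apply (excess_ge0_large c w (S w) (t w) ltac:(apply HRe; lra)
               ltac:(apply Heq; lra) tau); try apply Ht; lra. }
  split; [apply im_le_Cmod|]; split; [apply re_le_Cmod|].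
  assert (Hsq := Cmod_sqr_le_of_excess_ge0 c v (S v) (t v)
                   ltac:(apply HRe; lra) ltac:(apply Heq; lra) ltac:(lra) Hexcess).
  rewrite <- (sqrt_pow2 (Cmod (S v))) by apply Cmod_ge_0.
  apply sqrt_le_1_alt.
  pose proof (Cmod_ge_0 (c + t v)%C).
  replace (2 / v * Cmod (c + t v)) with (2 * (Cmod (c + t v) / v)) by (field; lra).
  assert (0 <= Cmod (c + t v) / v) by (apply Rdiv_le_0_compat; lra).
  lra.
Qed.
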